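(* On the event described in Lemma 2.4 (namely: (a) whenever $p_j$ and $a_i$ interview each other, $i\le j+8\log n$; and (b) whenever the algorithm considers a proposal to $p_j$, all $p_{j'}$ with $j'<\min(j,n-8\log n)$ are matched), for every $k\in[n]$ and at every point of the execution of the Adaptive Algorithm, the current matching $\mu$ satisfies $$\big|\{(a_i,p_j)\in\mu : i\ge k,\ j<k\}\big|\le 8\log n.$$
   Context: Logarithms are base 2. Model. Let $A=\{a_1,\dots,a_n\}$ be a set of applicants and $P=\{p_1,\dots,p_n\}$ a set of positions. Each applicant $a_i$ has a publicly known value $u_i\in\mathbb R$ and each position $p_j$ a publicly known value $v_j\in\mathbb R$, indexed so that $u_1\ge u_2\ge\dots\ge u_n$ and $v_1\ge v_2\ge\dots\ge v_n$. The random variables $\epsilon^A_{ij}$, $\epsilon^P_{ji}$ ($i,j\in[n]$) are mutually independent and identically distributed according to a known distribution symmetric about $0$ (mean zero). The utility of $a_i$ for $p_j$ is $v_j+\epsilon^A_{ij}$ and the utility of $p_j$ for $a_i$ is $u_i+\epsilon^P_{ji}$; the values $\epsilon^A_{ij},\epsilon^P_{ji}$ become known only when $a_i$ and $p_j$ interview each other. The observed utility $v^o_{ij}$ of $a_i$ for $p_j$ equals $v_j+\epsilon^A_{ij}$ if $a_i,p_j$ have interviewed and $v_j$ otherwise; $u^o_{ji}$ is defined symmetrically ($u_i+\epsilon^P_{ji}$ or $u_i$). Write $p_j\succ_{a_i}p_{j'}$ iff $v^o_{ij}>v^o_{ij'}$ and $a_i\succ_{p_j}a_{i'}$ iff $u^o_{ji}>u^o_{ji'}$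 (ties broken in favor of the smaller index); every agent prefers any partner to being unmatched. For a matching $\mu$, $\mu(x)$ denotes the partner of $x$ ($\emptyset$ if unmatched). Adaptive Algorithm. Initially all agents are unmatched and $v^o_{ij}=v_j$, $u^o_{ji}=u_i$ for all $i,j$. For an unmatched applicant $a$, let $\beta(a)$ be $a$'s most preferred position (w.r.t. current observed utilities) that has not yet rejected $a$. While some applicant is unmatched: let $j^*$ be the smallest index such that $\beta(a_i)=p_{j^*}$ for some unmatched $a_i$; let $a_{i^*}$ be $p_{j^*}$'s favorite applicant among $\{a_i:\beta(a_i)=p_{j^*},\mu(a_i)=\emptyset\}$. If $a_{i^*},p_{j^*}$ have not interviewed and ($i^*\le j^*$ or $a_{i^*}\succ_{p_{j^*}}\mu(p_{j^*})$), then they interview and $v^o_{i^*j^*},u^o_{j^*i^*}$ are updated. Otherwise: if $\mu(p_{j^*})\succ_{p_{j^*}}a_{i^*}$, then $p_{j^*}$ rejects $a_{i^*}$; else $p_{j^*}$ rejects $\mu(p_{j^*})$ (if nonempty) and $a_{i^*},p_{j^*}$ become matched. When all applicants are matched, output $\mu$. *)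

From mathcomp Require Import all_boot all_order all_algebra.
From mathcomp Require Import reals exp.
Set Implicit Arguments. Unset Strict Implicit. Unset Printing Implicit Defensive.
Import Order.TTheory GRing.Theory Num.Theory.
Local Open Scope ring_scope.

Definition log2 {R : realType} (x : R) : R := ln x / ln 2.

(* Agents are indexed by 'I_n (0-based); paper index of a_i / p_j is i.+1 / j.+1.
   A state of the Adaptive Algorithm:
   - mu_p j = Some i  iff  p_j is matched to a_i;
   - (i, j) \in interviewed  iff  a_i and p_j have interviewed;
   - (i, j) \in rejected     iff  p_j has rejected a_i. *)
Record state (n : nat) := State {
  mu_p : {ffun 'I_n -> option 'I_n};
  interviewed : {set 'I_n * 'I_n};
  rejected : {set 'I_n * 'I_n} }.

Section Algo.
Variables (R : realType) (n : nat) (u v : 'I_n -> R) (epsA epsP : 'I_n -> 'I_n -> R).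

(* observed utility of a_i for p_j *)
Definition vo (s : state n) (i j : 'I_n) : R :=
  if (i, j) \in interviewed s then v j + epsA i j else v j.
(* observed utility of p_j for a_i *)
Definition uo (s : state n) (j i : 'I_n) : R :=
  if (i, j) \in interviewed s then u i + epsP j i else u i.

(* p_j >_{a_i} p_j' (ties broken in favour of smaller index) *)
Definition prefA (s : state n) (i j j' : 'I_n) : bool :=
  (vo s i j' < vo s i j) || ((vo s i j == vo s i j') && (j < j')%N).
Definition prefP (s : state n) (j i i' : 'I_n) : bool :=
  (uo s j i' < uo s j i) || ((uo s j i == uo s j i') && (i < i')%N).

Definition matchedA (s : state n) (i : 'I_n) : bool := [exists j, mu_p s j == Some i].

Definition beta (s : state n) (i : 'I_n) : option 'I_n :=
  [pick j | ((i, j) \notin rejected s) &&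
            [forall j', ((i, j') \notin rejected s) ==> (j' == j) || prefA s i j j']].

Definition candidate (s : state n) (j i : 'I_n) : bool :=
  ~~ matchedA s i && (beta s i == Some j).

Definition jstar (s : state n) : option 'I_n :=
  [pick j | [exists i, candidate s j i] &&
            [forall j' : 'I_n, (j' < j)%N ==> ~~ [exists i, candidate s j' i]]].

Definition istar (s : state n) (j : 'I_n) : option 'I_n :=
  [pick i | candidate s j i &&
            [forall i', candidate s j i' ==> (i' == i) || prefP s j i i']].

(* a_i >_{p_j} o, where o = mu(p_j) may be empty (any partner beats unmatched) *)
Definition prefP_opt (s : state n) (j i : 'I_n) (o : option 'I_n) : bool :=
  if o is Some i' then prefP s j i i' else true.
Definition opt_prefP (s : state n) (j : 'I_n) (o : option 'I_n) (i : 'I_n) : bool :=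
  if o is Some i' then prefP s j i' i else false.

(* one iteration of the while loop; identity once all applicants are matched *)
Definition step (s : state n) : state n :=
  match jstar s with
  | None => s
  | Some j =>
    match istar s j with
    | None => s
    | Some i =>
      if ((i, j) \notin interviewed s) && ((i <= j)%N || prefP_opt s j i (mu_p s j))
      then State (mu_p s) ((i, j) |: interviewed s) (rejected s)
      else if opt_prefP s j (mu_p s j) i
      then State (mu_p s) (interviewed s) ((i, j) |: rejected s)
      else State [ffun j' => if j' == j then Some i else mu_p s j'] (interviewed s)
                 (if mu_p s j is Some i' then (i', j) |: rejected s else rejected s)
    end
  end.

Definition init_state : state n := State [ffun => None] set0 set0.

Definition exec (t : nat) : state n := iter t step init_state.

Definition eventA : Prop :=
  forall (t : nat) (i j : 'I_n), (i, j) \in interviewed (exec t) ->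
    (i.+1)%:R <= (j.+1)%:R + 8 * log2 (n%:R : R).

Definition eventB : Prop :=
  forall (t : nat) (j : 'I_n), jstar (exec t) = Some j ->
    forall j' : 'I_n,
      (j'.+1)%:R < Num.min ((j.+1)%:R : R) (n%:R - 8 * log2 (n%:R : R)) ->
      mu_p (exec t) j' != None.

End Algo.

From mathcomp Require Import all_boot all_order all_algebra.
From mathcomp Require Import reals exp.
Import Order.TTheory GRing.Theory Num.Theory.
Local Open Scope ring_scope.

(* A position p_j only ever accepts an applicant a_i with i > j after they
   have interviewed, so by event (a) every pair (a_i, p_j) of mu with j < k <= i
   has k - j <= i - j <= 8 log n.  As each position has one partner, these
   pairs have pairwise distinct positive gaps k - j, all at most 8 log n. *)

Lemma card_le_bigmax_inj (T : finType) (A : {pred T}) (d : T -> nat) :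
  {in A &, injective d} -> (forall x, x \in A -> 0 < d x)%N ->
  (#|A| <= \max_(x in A) d x)%N.
Proof.
move=> d_inj d_gt0; rewrite -(size_image d).
have -> : (\max_(x in A) d x = size (iota 1 (\max_(x in A) d x)))%N.
  by rewrite size_iota.
apply: uniq_leq_size; first by rewrite map_inj_in_uniq ?enum_uniq // => x y;
  rewrite !mem_enum; exact: d_inj.
move=> _ /imageP[x xA ->]; rewrite mem_iota add1n ltnS d_gt0 //=.
exact: leq_bigmax_cond.
Qed.

Section Invariant.
Context {R : realType} {n : nat} (u v : 'I_n -> R) (epsA epsP : 'I_n -> 'I_n -> R).

Lemma istar_candidate {s : state n} {j i : 'I_n} :
  istar u v epsA epsP s j = Some i -> candidate v epsA s j i.
Proof. by rewrite /istar; case: pickP => // x /andP[? _] [<-]. Qed.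

Definition matched_above_interviewed (s : state n) : Prop :=
  forall i j : 'I_n, mu_p s j = Some i -> (j < i)%N -> (i, j) \in interviewed s.

Lemma step_matched_above_interviewed (s : state n) :
  matched_above_interviewed s ->
  matched_above_interviewed (step u v epsA epsP s).
Proof.
move=> inv_s; rewrite /step.
case: (jstar _ _ _) => [j0|] //.
case E: (istar _ _ _ _ _ _) => [i0|] //.
case: ifP => not_interviewed.
  by move=> i j /= mij ji; rewrite in_setU1 inv_s ?orbT.
case: ifP => [_|not_rejected]; first exact: inv_s.
move=> i j /=; rewrite ffunE.
case: eqP => [-> [<-] ji|_ mij ji]; last exact: inv_s.
apply/negPn/negP => i_not_int.
move: not_interviewed; rewrite i_not_int /= leqNgt ji /=.
move: not_rejected; rewrite /opt_prefP /prefP_opt.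
case mj0: (mu_p s j0) => [i'|] // not_pref' not_pref.
(* p_j0 prefers neither of a_i0, a_i' to the other, so they are the same
   applicant; but a_i0 is unmatched while a_i' is matched to p_j0. *)
have same_applicant : i0 = i'.
  move: not_pref' not_pref; rewrite /prefP.
  case: (ltgtP (uo u epsP s j0 i') (uo u epsP s j0 i0)) => //= _ h1 h2.
  by apply/val_inj/eqP; rewrite eqn_leq leqNgt h1 leqNgt h2.
have /andP[/negP unmatched _] := istar_candidate E.
by apply: unmatched; apply/existsP; exists j0; rewrite mj0 same_applicant.
Qed.

Lemma exec_matched_above_interviewed (t : nat) :
  matched_above_interviewed (exec u v epsA epsP t).
Proof.
elim: t => [|t IH] i j; first by rewrite /exec /= ffunE.
by rewrite /exec iterS; apply: step_matched_above_interviewed.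
Qed.

End Invariant.

Theorem claim2p5 (R : realType) (n : nat) (u v : 'I_n -> R)
    (epsA epsP : 'I_n -> 'I_n -> R)
    (hu : forall i j : 'I_n, (i <= j)%N -> u j <= u i)
    (hv : forall i j : 'I_n, (i <= j)%N -> v j <= v i) :
  eventA u v epsA epsP -> eventB u v epsA epsP ->
  forall k : nat, (1 <= k <= n)%N ->
  forall t : nat,
    (#|[set ij : 'I_n * 'I_n |
         (mu_p (exec u v epsA epsP t) ij.2 == Some ij.1)
         && (k <= ij.1.+1)%N && (ij.2.+1 < k)%N]|%:R : R)
    <= 8 * log2 (n%:R : R).
Proof.
move=> evA _ k /andP[k_gt0 k_le_n] t.
set L := 8 * log2 (n%:R : R); set A := [set ij | _].
pose gap (ij : 'I_n * 'I_n) := (k - ij.2.+1)%N.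
have L_ge0 : 0 <= L.
  by rewrite mulr_ge0 // divr_ge0 ?ln_ge0 ?ler1n // (leq_trans k_gt0).
have gap_le_L ij : ij \in A -> (gap ij)%:R <= L.
  case: ij => i j; rewrite inE /= => /andP[/andP[/eqP mij ki] jk].
  have int_ij := exec_matched_above_interviewed u v epsA epsP t i j mij
    (leq_trans jk ki).
  have := evA t i j int_ij.
  rewrite -lerBlDl; apply: le_trans.
  by rewrite natrB ?(ltnW jk) // lerD2r ler_nat.
have gap_inj : {in A &, injective gap}.
  move=> [i j] [i' j']; rewrite !inE /=.
  move=> /andP[/andP[/eqP mij _] jk] /andP[/andP[/eqP mij' _] j'k] /= eq_gap.
  have ej : j = j'.
    apply/val_inj/succn_inj; move/(congr1 (subn k)): eq_gap.
    by rewrite /gap /= !subKn // ltnW.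
  by move: mij'; rewrite -ej mij => -[->].
have gap_gt0 ij : ij \in A -> (0 < gap ij)%N.
  by case: ij => i j; rewrite inE /= subn_gt0 => /andP[].
apply: le_trans (_ : (\max_(ij in A) gap ij)%:R <= L).
  by rewrite ler_nat card_le_bigmax_inj.
elim/big_ind: _ => // m1 m2 ? ?.
by rewrite /maxn; case: ltnP.
Qed.
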